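(* Let $W\in\mathcal{P}(\mathcal{Y}|\mathcal{X})$ be singular. Consider any $(N,R)$ code $(f,\varphi)$ with codewords $\mathbf{x}^N(m)$, $m\in\mathcal{M}$, and average error probability $\bar{\mathrm{P}}_{\mathrm{e}}(f,\varphi)$. Fix $Q\in\mathcal{P}(\mathcal{X})$ and $\mathbf{z}^N\in\mathcal{X}^N$, and assume that for all $m\in\mathcal{M}$, $W(\mathcal{S}_R(Q)\mid\mathbf{x}^N(m))=W(\mathcal{S}_R(Q)\mid\mathbf{z}^N)$ and $q_Q$ dominates $W(\cdot|x)$ for every $x$ in the support of the empirical distribution of $\mathbf{x}^N(m)$. Then $$\bar{\mathrm{P}}_{\mathrm{e}}(f,\varphi)\ge W(\mathcal{S}_R(Q)\mid\mathbf{z}^N)-\sum_{\mathbf{y}^N\in\mathcal{S}_R(Q)}q_Q(\mathbf{y}^N)\exp\Big\{-N\Big[R-\frac1N\sum_{i=1}^N\ln\frac1{\alpha_{y_i}(Q)}\Big]\Big\}.$$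
   Context: $\mathcal{X},\mathcal{Y}$ finite; memoryless channel $W(\mathbf{y}^N|\mathbf{x}^N)=\prod_iW(y_i|x_i)$. $W$ is singular: for all $(x,y,z)$ with $W(y|x)W(y|z)>0$, $W(y|x)=W(y|z)$. An $(N,R)$ code has message set $\mathcal{M}=\{1,\dots,\lceil e^{NR}\rceil\}$, encoder $f$ and decoder $\varphi:\mathcal{Y}^N\to\mathcal{M}$; average error probability is over uniform messages. $q_Q(y)=\sum_xQ(x)W(y|x)$, $q_Q(\mathbf{y}^N)=\prod_iq_Q(y_i)$; $\alpha_y(Q)=\sum_{x:W(y|x)>0}Q(x)$; $\mathcal{S}_R(Q)=\{\mathbf{y}^N:\frac1N\sum_i\ln\frac1{\alpha_{y_i}(Q)}\le R\}$. ''$q_Q$ dominates $W(\cdot|x)$'' means $W(\cdot|x)\ll q_Q$. *)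

From HB Require Import structures.
From mathcomp Require Import all_boot all_order all_algebra.
From mathcomp Require Import all_classical all_reals.
From mathcomp Require Import sequences exp.
Set Implicit Arguments. Unset Strict Implicit. Unset Printing Implicit Defensive.
Import Order.TTheory GRing.Theory Num.Theory.
Local Open Scope ring_scope.

Section Defs.
Variables (Rt : realType) (X Y : finType).

(* W x y = W(y|x) *)
Definition is_channel (W : X -> Y -> Rt) :=
  forall x, (forall y, 0 <= W x y) /\ \sum_(y : Y) W x y = 1.

Definition is_distr (Q : X -> Rt) := (forall x, 0 <= Q x) /\ \sum_(x : X) Q x = 1.

Definition singular (W : X -> Y -> Rt) :=
  forall x y z, 0 < W x y * W z y -> W x y = W z y.

Definition WN {N : nat} (W : X -> Y -> Rt) (x : {ffun 'I_N -> X}) (y : {ffun 'I_N -> Y}) : Rt :=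
  \prod_(i < N) W (x i) (y i).

Definition qQ (W : X -> Y -> Rt) (Q : X -> Rt) (y : Y) : Rt := \sum_(x : X) Q x * W x y.

Definition qQN {N : nat} (W : X -> Y -> Rt) (Q : X -> Rt) (y : {ffun 'I_N -> Y}) : Rt :=
  \prod_(i < N) qQ W Q (y i).

Definition alpha (W : X -> Y -> Rt) (Q : X -> Rt) (y : Y) : Rt :=
  \sum_(x : X | 0 < W x y) Q x.

(* S_R(Q); ln(1/0) = +oo in the paper, so sequences with some alpha = 0
   are excluded explicitly. *)
Definition SR (N : nat) (W : X -> Y -> Rt) (Q : X -> Rt) (r : Rt) : {set {ffun 'I_N -> Y}} :=
  [set y : {ffun 'I_N -> Y} | [forall i : 'I_N, 0 < alpha W Q (y i)] &&
           ((N%:R)^-1 * \sum_(i < N) ln ((alpha W Q (y i))^-1) <= r)].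

Definition WNset {N : nat} (W : X -> Y -> Rt) (S : {set {ffun 'I_N -> Y}}) (x : {ffun 'I_N -> X}) : Rt :=
  \sum_(y in S) WN W x y.

Definition msize (N : nat) (r : Rt) : nat := `|Num.ceil (expR (N%:R * r))|%N.

Definition avg_err {N M : nat} (W : X -> Y -> Rt)
  (f : 'I_M -> {ffun 'I_N -> X}) (phi : {ffun 'I_N -> Y} -> 'I_M) : Rt :=
  (M%:R)^-1 * \sum_(m < M) \sum_(y : {ffun 'I_N -> Y} | phi y != m) WN W (f m) y.

End Defs.

(* On a singular channel every positive transition probability into y equals
   q_Q(y) / alpha_y(Q), so W(y^N | x^N) <= q_Q(y^N) exp(sum_i ln 1/alpha_{y_i}(Q))
   for every input sequence.  Since every codeword puts the same mass on S_R(Q)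
   as z^N, the average error is at least that mass minus (1/|M|) times the
   probability of decoding correctly inside S_R(Q); bounding each summand as
   above and using |M| >= e^{NR} gives the claim. *)
From HB Require Import structures.
From mathcomp Require Import all_boot all_order all_algebra.
From mathcomp Require Import all_classical all_reals.
From mathcomp Require Import sequences exp.
Set Implicit Arguments. Unset Strict Implicit. Unset Printing Implicit Defensive.
Import Order.TTheory GRing.Theory Num.Theory.
Local Open Scope ring_scope.

Lemma expR_le_msize (Rt : realType) (N : nat) (r : Rt) :
  expR (N%:R * r) <= (msize N r)%:R.
Proof.
rewrite /msize natr_absz ger0_norm; first exact: ceil_ge.
by rewrite ceil_ge0; apply: lt_le_trans (expR_ge0 _); rewrite ltrN10.
Qed.

Lemma expR_sum_ln_inv (Rt : realType) (I : finType) (a : I -> Rt) :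
  (forall i, 0 < a i) -> expR (\sum_i ln (a i)^-1) = \prod_i (a i)^-1.
Proof.
move=> a_gt0; rewrite (big_morph expR (@expRD Rt) (@expR0 Rt)).
by apply: eq_bigr => i _; rewrite lnK // posrE invr_gt0.
Qed.

Lemma expR_rate_gap (Rt : realType) (N : nat) (r : Rt) (g : 'I_N -> Rt) :
  expR (- (N%:R * (r - N%:R^-1 * \sum_(i < N) g i))) =
  (expR (N%:R * r))^-1 * expR (\sum_(i < N) g i).
Proof.
case: N g => [|n] g.
  by rewrite big_ord0 !mul0r oppr0 expR0 invr1 mul1r.
by rewrite mulrBr mulrA mulfV ?mul1r ?pnatr_eq0 // opprB expRB mulrC.
Qed.

Section Decoding.
Variables (Rt : realType) (X Y : finType) (N M : nat).
Variables (W : X -> Y -> Rt) (f : 'I_M -> {ffun 'I_N -> X}).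
Variable phi : {ffun 'I_N -> Y} -> 'I_M.
Hypothesis W_ge0 : forall x y, 0 <= W x y.

Lemma WN_ge0 (x : {ffun 'I_N -> X}) (y : {ffun 'I_N -> Y}) : 0 <= WN W x y.
Proof. exact: prodr_ge0. Qed.

Lemma sum_decoded_in (S : {set {ffun 'I_N -> Y}}) (g : 'I_M -> {ffun 'I_N -> Y} -> Rt) :
  \sum_(m < M) \sum_(y in S | phi y == m) g m y = \sum_(y in S) g (phi y) y.
Proof.
rewrite (exchange_big_dep (fun y => y \in S)) /=; last by move=> m y _ /andP[].
apply: eq_bigr => y yS; rewrite (eq_bigl (pred1 (phi y))) ?big_pred1_eq //.
by move=> m /=; rewrite yS eq_sym.
Qed.

Lemma message_err_ge_mass_minus_correct (S : {set {ffun 'I_N -> Y}}) (m : 'I_M) :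
  WNset W S (f m) - \sum_(y in S | phi y == m) WN W (f m) y <=
  \sum_(y | phi y != m) WN W (f m) y.
Proof.
rewrite /WNset (bigID (fun y => phi y == m)) /= addrAC subrr add0r big_mkcondl.
by apply: ler_sum => y _; case: ifP; rewrite ?lexx ?WN_ge0.
Qed.

Lemma avg_err_ge_mass_minus_correct (S : {set {ffun 'I_N -> Y}}) (c : Rt) :
  (0 < M)%N -> (forall m, WNset W S (f m) = c) ->
  c - M%:R^-1 * \sum_(y in S) WN W (f (phi y)) y <= avg_err W f phi.
Proof.
move=> M_gt0 mass_S.
have M_neq0 : M%:R != 0 :> Rt by rewrite pnatr_eq0 -lt0n.
have {1}-> : c = M%:R^-1 * \sum_(m < M) c.
  by rewrite sumr_const card_ord -[c *+ M]mulr_natl mulrA mulVf ?mul1r.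
rewrite -(sum_decoded_in S (fun m => WN W (f m))) -mulrBr -sumrB /avg_err.
rewrite ler_wpM2l ?invr_ge0 ?ler0n //.
by apply: ler_sum => m _; rewrite -(mass_S m); exact: message_err_ge_mass_minus_correct.
Qed.

End Decoding.

Section SingularChannel.
Variables (Rt : realType) (X Y : finType) (W : X -> Y -> Rt) (Q : X -> Rt).
Hypotheses (W_ge0 : forall x y, 0 <= W x y) (W_singular : singular W).
Hypothesis Q_ge0 : forall x, 0 <= Q x.

Lemma qQ_singular x y : 0 < W x y -> qQ W Q y = W x y * alpha W Q y.
Proof.
move=> Wxy_gt0; rewrite /qQ /alpha mulr_sumr (bigID (fun x' => 0 < W x' y)) /=.
rewrite [X in _ + X]big1 ?addr0 => [|x' /negbTE Wx'y_gt0F]; last first.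
  have /eqP -> : W x' y == 0 by rewrite eq_le W_ge0 andbT leNgt Wx'y_gt0F.
  by rewrite mulr0.
apply: eq_bigr => x' Wx'y_gt0; rewrite mulrC (@W_singular x' y x) //.
exact: mulr_gt0.
Qed.

Lemma W_le_qQ_div_alpha x y : 0 < alpha W Q y -> W x y <= qQ W Q y / alpha W Q y.
Proof.
move=> alpha_gt0; have [Wxy_gt0|Wxy_le0] := ltP 0 (W x y).
  by rewrite (qQ_singular Wxy_gt0) mulfK ?gt_eqF.
apply: le_trans Wxy_le0 _; apply: divr_ge0; last exact: ltW.
by apply: sumr_ge0 => x' _; apply: mulr_ge0.
Qed.

Lemma WN_le_qQN_expR (N : nat) (x : {ffun 'I_N -> X}) (y : {ffun 'I_N -> Y}) :
  (forall i, 0 < alpha W Q (y i)) ->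
  WN W x y <= qQN W Q y * expR (\sum_(i < N) ln (alpha W Q (y i))^-1).
Proof.
move=> alpha_gt0; rewrite expR_sum_ln_inv // /qQN -big_split /=.
by apply: ler_prod => i _; rewrite W_ge0 W_le_qQ_div_alpha.
Qed.

End SingularChannel.

Theorem lemma11 (Rt : realType) (X Y : finType) (W : X -> Y -> Rt)
  (N : nat) (r : Rt)
  (f : 'I_(msize N r) -> {ffun 'I_N -> X})
  (phi : {ffun 'I_N -> Y} -> 'I_(msize N r))
  (Q : X -> Rt) (z : {ffun 'I_N -> X}) :
  is_channel W -> singular W -> is_distr Q ->
  (forall m, WNset W (SR N W Q r) (f m) = WNset W (SR N W Q r) z) ->
  (forall m (i : 'I_N) (y : Y), qQ W Q y = 0 -> W (f m i) y = 0) ->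
  avg_err W f phi >=
    WNset W (SR N W Q r) z
    - \sum_(y in SR N W Q r)
        qQN W Q y * expR (- (N%:R * (r - (N%:R)^-1 *
                     \sum_(i < N) ln ((alpha W Q (y i))^-1)))).
Proof.
move=> W_chan W_singular [Q_ge0 _] mass_S _.
have W_ge0 x y : 0 <= W x y by case: (W_chan x).
have M_ge : expR (N%:R * r) <= (msize N r)%:R := expR_le_msize N r.
have M_gt0 : 0 < (msize N r)%:R :> Rt := lt_le_trans (expR_gt0 _) M_ge.
apply: le_trans (avg_err_ge_mass_minus_correct phi W_ge0 _ mass_S); last by rewrite -(ltr0n Rt).
rewrite lerD2l lerN2 mulr_sumr; apply: ler_sum => y.
rewrite inE => /andP[/forallP alpha_gt0 _].
rewrite expR_rate_gap mulrCA ler_pM //.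
- by rewrite invr_ge0 ltW.
- exact: WN_ge0.
- by rewrite lef_pV2 ?posrE ?expR_gt0.
- apply: (WN_le_qQN_expR W_ge0 W_singular Q_ge0) => i; exact: alpha_gt0.
Qed.
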